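(* Let $n\ge 1$ and consider the transformation $(u_1,\ldots,u_n)\mapsto(x_1,\ldots,x_n)$ given by $$x_i=\frac{\sin u_i}{\cos u_{i+1}}\quad(1\le i\le n),$$ with indices taken cyclically so that $u_{n+1}:=u_1$, defined at points where all $\cos u_i\neq 0$. Then its Jacobian determinant is $$\frac{\partial(x_1,\ldots,x_n)}{\partial(u_1,\ldots,u_n)}=1\pm (x_1x_2\cdots x_n)^2,$$ where the sign is $-$ if $n$ is even and $+$ if $n$ is odd. *)

From HB Require Import structures.
From mathcomp Require Import all_boot all_order all_algebra.
From mathcomp Require Import all_classical all_reals all_analysis.
Set Implicit Arguments. Unset Strict Implicit. Unset Printing Implicit Defensive.
Import Order.TTheory GRing.Theory Num.Theory.
Local Open Scope ring_scope.

Definition sincos_map (R : realType) (n : nat) (u : 'rV[R]_n) : 'rV[R]_n :=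
  \row_(i < n) (sin (u 0 i) / cos (u 0 (ordS i))).

From HB Require Import structures.
From mathcomp Require Import all_boot all_order all_algebra.
From mathcomp Require Import all_classical all_reals all_analysis.
From mathcomp Require Import ring.
Import Order.TTheory GRing.Theory Num.Theory.
Import numFieldNormedType.Exports.
Local Open Scope ring_scope.

(* The Jacobian matrix is cyclically bidiagonal: x_k depends only on u_k and
   u_(k+1), with dx_k/du_k = cos u_k / cos u_(k+1) and
   dx_k/du_(k+1) = sin u_k sin u_(k+1) / cos^2 u_(k+1).  Expanding along the
   first row, the determinant of such a matrix is the product of its diagonal
   plus (-1)^(n+1) times the product of its off-diagonal entries.  The first
   product telescopes to 1, and the second is
   (prod_k sin u_k / prod_k cos u_k)^2 = (x_1 ... x_n)^2. *)

Lemma val_ordS n (k : 'I_n) : val (ordS k) = if k.+1 == n then 0%N else k.+1.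
Proof.
rewrite /=; case: eqP => [->|/eqP nk]; first by rewrite modnn.
by rewrite modn_small // ltn_neqAle nk ltn_ord.
Qed.

Lemma big_ordS {T : Type} {idx : T} (op : Monoid.com_law idx) {n} (F : 'I_n -> T) :
  \big[op/idx]_k F (ordS k) = \big[op/idx]_k F k.
Proof. by rewrite [RHS](reindex_inj (@ordS_inj n)). Qed.

(* For n = 1 both terms land on the diagonal: the matrix is [a 0 + b 0]. *)
Definition cyclic_bidiag {R : pzRingType} {n} (a b : 'I_n -> R) : 'M[R]_n :=
  \matrix_(j, k) ((j == k)%:R * a k + (j == ordS k)%:R * b k).

Section cyclic_bidiag.
Variables (R : comPzRingType) (m : nat) (a b : 'I_m.+2 -> R).
Let A := cyclic_bidiag a b.

Lemma cyclic_bidiag_lift0 i j :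
  A (lift ord0 i) (lift ord0 j) =
  (i == j :> nat)%:R * a (lift ord0 j) + (i == j.+1 :> nat)%:R * b (lift ord0 j).
Proof.
rewrite mxE -!val_eqE val_ordS /= /bump /= !add1n eqSS.
case: ifP => [/eqP[j_max]|_]; last by rewrite eqSS.
by rewrite j_max (@ltn_eqF i m.+1).
Qed.

Lemma cyclic_bidiag_lift_max i j :
  A (lift ord0 i) (lift ord_max j) =
  (i.+1 == j :> nat)%:R * a (lift ord_max j) + (i == j :> nat)%:R * b (lift ord_max j).
Proof.
rewrite mxE -!val_eqE val_ordS /= /bump.
have jm : (j <= m)%N := ltn_ord j.
by rewrite ltnNge jm add0n add1n eqSS ifN ?eqSS // ltn_eqF.
Qed.

Lemma det_cyclic_bidiag_minor00 :
  \det (row' ord0 (col' ord0 A)) = \prod_(i < m.+1) a (lift ord0 i).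
Proof.
rewrite det_trig; last first.
  apply/is_trig_mxP => i j lt_ij; rewrite 2!mxE cyclic_bidiag_lift0.
  by rewrite (ltn_eqF lt_ij) (@ltn_eqF i j.+1 (ltnW lt_ij)) !mul0r addr0.
apply: eq_bigr => i _; rewrite 2!mxE cyclic_bidiag_lift0 eqxx.
by rewrite (ltn_eqF (ltnSn i)) mul0r mul1r addr0.
Qed.

Lemma det_cyclic_bidiag_minor0max :
  \det (row' ord0 (col' ord_max A)) = \prod_(i < m.+1) b (lift ord_max i).
Proof.
rewrite -det_tr det_trig; last first.
  apply/is_trig_mxP => i j lt_ij; rewrite 3!mxE cyclic_bidiag_lift_max.
  by rewrite (gtn_eqF lt_ij) (@gtn_eqF i j.+1 (ltnW lt_ij)) !mul0r addr0.
apply: eq_bigr => i _; rewrite 3!mxE cyclic_bidiag_lift_max eqxx.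
by rewrite (gtn_eqF (ltnSn i)) mul0r mul1r add0r.
Qed.

Lemma det_cyclic_bidiag_ge2 :
  \det A = \prod_i a i + (-1) ^+ m.+1 * \prod_i b i.
Proof.
(* Row 0 has nonzero entries only in columns ord0 and ord_max. *)
rewrite (expand_det_row A ord0) (bigD1 ord0) //= (bigD1 ord_max) //= big1 ?addr0.
  rewrite /cofactor det_cyclic_bidiag_minor00 det_cyclic_bidiag_minor0max.
  have ordS_max : ordS (@ord_max m.+1) = ord0 by apply: val_inj; rewrite /= modnn.
  have lift_maxE i : lift ord_max i = widen_ord (leqnSn m.+1) i.
    by apply: val_inj; exact: lift_max.
  rewrite !mxE ordS_max /= [\prod_(i < m.+2) a i]big_ord_recl.
  rewrite [\prod_(i < m.+2) b i]big_ord_recr /=.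
  under [\prod_(i < m.+1) b _]eq_bigr do rewrite lift_maxE.
  by rewrite !mul1r !mul0r addr0 add0r add0n mulrCA [b ord_max * _]mulrC.
move=> j /andP[j0 jmax]; rewrite mxE.
have -> : (ord0 == ordS j) = false.
  rewrite -val_eqE val_ordS; case: ifP => [/eqP[j_max]|//].
  by case/eqP: jmax; apply: val_inj.
by rewrite [ord0 == j]eq_sym (negbTE j0) !mulr0n !mul0r add0r mul0r.
Qed.
End cyclic_bidiag.

Lemma det_cyclic_bidiag (R : comPzRingType) n (a b : 'I_n.+1 -> R) :
  \det (cyclic_bidiag a b) = \prod_i a i + (-1) ^+ n * \prod_i b i.
Proof.
case: n a b => [|m] a b; last exact: det_cyclic_bidiag_ge2.
by rewrite det_mx11 mxE !big_ord1 eqxx expr0 !mul1r.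
Qed.

Lemma prod_div_ordS {F : fieldType} {n} (c : 'I_n -> F) :
  (forall k, c k != 0) -> \prod_k (c k / c (ordS k)) = 1.
Proof.
move=> c_neq0; rewrite prodf_div [\prod_k c (ordS k)]big_ordS divff //.
by apply/prodf_neq0 => k _.
Qed.

Lemma prod_mul_div_ordS {F : fieldType} {n} (s c : 'I_n -> F) :
  \prod_k (s k * s (ordS k) / c (ordS k) ^+ 2) = (\prod_k (s k / c (ordS k))) ^+ 2.
Proof.
rewrite !prodf_div big_split prodrXl /= [\prod_k c (ordS k)]big_ordS.
by rewrite [\prod_k s (ordS k)]big_ordS expr_div_n expr2.
Qed.

Section derive_coordinates.
Context {R : realFieldType}.

Lemma derive_coord m n (x v : 'M[R]_(m, n)) i j :
  'D_v (fun y : 'M[R]_(m, n) => y i j) x = v i j.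
Proof.
have := derive_mx (@ex_derive _ _ _ x v id v (is_derive_id x v)).
by rewrite derive_id => /matrixP /(_ i j); rewrite mxE.
Qed.

Lemma differentiable_rV {V : normedModType R} n (f : V -> 'rV[R]_n) x :
  (forall j, differentiable (fun y => f y 0 j) x) -> differentiable f x.
Proof.
move=> df; have -> : f = \sum_(j < n) (fun y => f y 0 j *: delta_mx 0 j).
  by apply/funext => y; rewrite fct_sumE -row_sum_delta.
by apply: differentiable_sum => j; exact: differentiableZl.
Qed.

Lemma jacobian_entry m n (f : 'rV[R]_m -> 'rV[R]_n) p i j :
  differentiable f p ->
  jacobian f p i j = 'D_(delta_mx 0 i) (fun x => f x 0 j) p.
Proof.
move=> df; have := deriveEjacobian (delta_mx 0 i) df.
rewrite -rowE derive_mx; last exact: diff_derivable.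
by move=> /matrixP /(_ 0 j); rewrite !mxE.
Qed.

Lemma derive_comp_scalar {V : normedModType R} (f : V -> R) (g : R -> R) x v :
  differentiable f x -> derivable g (f x) 1 ->
  'D_v (g \o f) x = g^`()%classic (f x) * 'D_v f x.
Proof.
move=> df /derivable1_diffP dg.
rewrite !deriveE //; last exact: differentiable_comp.
rewrite diff_comp // derive1E' //= mulrC.
by rewrite -[RHS]/('d f x v *: 'd g (f x) 1) -linearZ /= [_%:A]mulr1.
Qed.

Lemma differentiable_comp_coord (h : R -> R) m n (x : 'M[R]_(m, n)) i j :
  derivable h (x i j) 1 -> differentiable (fun y : 'M[R]_(m, n) => h (y i j)) x.
Proof.
move=> /derivable1_diffP dh.
exact: (differentiable_comp (differentiable_coord x i j) dh).
Qed.

Lemma derive_comp_coord (h : R -> R) m n (x v : 'M[R]_(m, n)) i j :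
  derivable h (x i j) 1 ->
  'D_v (fun y : 'M[R]_(m, n) => h (y i j)) x = h^`()%classic (x i j) * v i j.
Proof.
move=> dh; rewrite (@derive_comp_scalar _ (fun y : 'M[R]_(m, n) => y i j) h) //.
  by rewrite derive_coord.
exact: differentiable_coord.
Qed.
End derive_coordinates.

Section sincos_jacobian.
Variables (R : realType) (n : nat) (u : 'rV[R]_n).
Hypothesis cos_u_neq0 : forall k, cos (u 0 k) != 0.

Lemma differentiable_sincos_map_entry k :
  differentiable (fun x => sincos_map x 0 k) u.
Proof.
under eq_fun do rewrite mxE.
apply: differentiableM; first exact/differentiable_comp_coord/derivable_sin.
by apply: differentiableV; [exact/differentiable_comp_coord/derivable_cos|].
Qed.

Lemma derive_sincos_map_entry k v :
  'D_v (fun x => sincos_map x 0 k) u =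
  v 0 k * (cos (u 0 k) / cos (u 0 (ordS k))) +
  v 0 (ordS k) * (sin (u 0 k) * sin (u 0 (ordS k)) / cos (u 0 (ordS k)) ^+ 2).
Proof.
have -> : (fun x => sincos_map x 0 k) =
    (fun x : 'rV[R]_n => sin (x 0 k)) * (fun x => (cos (x 0 (ordS k)))^-1).
  by apply/funext => x; rewrite mxE.
have dsin : derivable (@sin R) (u 0 k) 1 by exact: derivable_sin.
have dcos : derivable (@cos R) (u 0 (ordS k)) 1 by exact: derivable_cos.
rewrite deriveM; last 2 first.
- exact/diff_derivable/differentiable_comp_coord.
- by apply/diff_derivable/differentiableV; [exact: differentiable_comp_coord|].
rewrite deriveV //; last exact/diff_derivable/differentiable_comp_coord.
rewrite !derive_comp_coord // !derive1E !derive_val /GRing.scale /=; ring.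
Qed.

Lemma jacobian_sincos_map :
  jacobian (@sincos_map R n) u =
  cyclic_bidiag (fun k => cos (u 0 k) / cos (u 0 (ordS k)))
    (fun k => sin (u 0 k) * sin (u 0 (ordS k)) / cos (u 0 (ordS k)) ^+ 2).
Proof.
apply/matrixP => j k.
rewrite jacobian_entry; last exact/differentiable_rV/differentiable_sincos_map_entry.
by rewrite derive_sincos_map_entry !mxE !eqxx /= [k == _]eq_sym [ordS k == _]eq_sym.
Qed.
End sincos_jacobian.

Theorem lemma1 (R : realType) (n : nat) (hn : (0 < n)%N) (u : 'rV[R]_n)
  (hcos : forall i : 'I_n, cos (u 0 i) != 0) :
  \det (jacobian (@sincos_map R n) u) =
  (if odd n then 1 + (\prod_(i < n) sincos_map u 0 i) ^+ 2
   else 1 - (\prod_(i < n) sincos_map u 0 i) ^+ 2).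
Proof.
case: n hn u hcos => [//|m] _ u hcos.
rewrite jacobian_sincos_map // det_cyclic_bidiag prod_div_ordS //.
rewrite (prod_mul_div_ordS (fun i => sin (u 0 i)) (fun i => cos (u 0 i))).
under [\prod_(i < m.+1) sincos_map u 0 i]eq_bigr do rewrite mxE.
by rewrite -signr_odd /=; case: (odd m); rewrite ?expr0 ?expr1 ?mul1r ?mulN1r.
Qed.
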